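(* Let $t$, $q$, $r$ be integers with $q \geq 0$ and $2 \leq r \leq t-1$, and suppose that $x = tq + r$ is odd. Then there exists a coloring of the edges of the complete graph $K_x$ with $t$ colors such that every vertex is incident with at least $q$ edges of each color. *)

From mathcomp Require Import all_boot all_order.
Set Implicit Arguments. Unset Strict Implicit. Unset Printing Implicit Defensive.

(* The complete graph K_x has vertex set 'I_x and edge set all 2-element
   subsets of vertices.  A t-edge-coloring assigns a colour in 'I_t to each
   edge, i.e. a function from 2-element sets to colours (values on sets that
   are not edges are irrelevant). *)
Definition edge_coloring (x t : nat) := {set 'I_x} -> 'I_t.

Definition color_degree (x t : nat) (c : edge_coloring x t) (v : 'I_x) (i : 'I_t) : nat :=
  #|[set u : 'I_x | (u != v) && (c [set u; v] == i)]|.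

From mathcomp Require Import all_boot all_order.
From mathcomp Require Import zify.
Set Implicit Arguments. Unset Strict Implicit. Unset Printing Implicit Defensive.

(* Identify the vertices with Z/x (x odd) and label the edge {a, b} by a + b.
   Each vertex v then meets every label exactly once, except 2v, which it
   misses.  The labels 0 and 1 are given up: every vertex v with 2v not in
   {0, 1} owns exactly one edge of sum 0 or 1 (the one towards -v or 1 - v),
   and that edge is relabelled 2v.  Now every vertex meets all x - 2 labels
   2, ..., x - 1, and colouring label s by (s - 2) mod t gives each colour at
   least q labels because x - 2 >= t q. *)

Section LiftToPairs.
Variables (T : finType) (R : Type) (r0 : R) (L : T -> T -> R).
Hypothesis L_sym : forall a b, L a b = L b a.

Definition lift_set2 (S : {set T}) : R :=
  if [pick p : T * T | S == [set p.1; p.2]] is Some p then L p.1 p.2 else r0.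

Lemma set2_sym_eq a b u v : [set a; b] = [set u; v] -> L a b = L u v.
Proof.
move=> eq_ab_uv.
have a_in : a \in [set u; v] by rewrite -eq_ab_uv set21.
have b_in : b \in [set u; v] by rewrite -eq_ab_uv set22.
have u_in : u \in [set a; b] by rewrite eq_ab_uv set21.
have v_in : v \in [set a; b] by rewrite eq_ab_uv set22.
move: a_in b_in u_in v_in; rewrite !inE.
by move=> /pred2P[]-> /pred2P[]-> /pred2P[] eq_u /pred2P[] eq_v; subst.
Qed.

Lemma lift_set2E u v : lift_set2 [set u; v] = L u v.
Proof.
rewrite /lift_set2; case: pickP => [p /eqP /set2_sym_eq // | no_pair].
by have := no_pair (u, v); rewrite eqxx.
Qed.

End LiftToPairs.

Lemma leq_color_degree x t (c : edge_coloring x t) (v : 'I_x) (i : 'I_t)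
    n (f : 'I_n -> 'I_x) :
  injective f -> (forall j, f j != v /\ c [set f j; v] = i) ->
  n <= color_degree c v i.
Proof.
move=> f_inj f_col; rewrite /color_degree.
rewrite -[n]card_ord -(card_imset _ f_inj).
apply/subset_leq_card/subsetP => _ /imsetP[j _ ->].
by have [f_neq f_c] := f_col j; rewrite inE f_neq f_c eqxx.
Qed.

Section SumLabelling.
Variable x : nat.
Hypothesis x_odd : odd x.

(* The owner of an edge whose sum is 0 or 1 mod x: the smaller endpoint when
   a + b = x + 1, the larger one otherwise. *)
Definition claimant (a b : nat) : nat :=
  if a + b == x.+1 then minn a b else maxn a b.

Definition edge_label (a b : nat) : nat :=
  let s := (a + b) %% x in if 1 < s then s else (2 * claimant a b) %% x.

Lemma edge_labelC a b : edge_label a b = edge_label b a.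
Proof. by rewrite /edge_label /claimant addnC minnC maxnC. Qed.

Definition owned_neighbor (v : nat) : nat :=
  (if v <= x./2 then x.+1 - v else x - v) %% x.

Definition partner (v s : nat) : nat :=
  if (2 * v) %% x == s then owned_neighbor v else (s + x - v) %% x.

Lemma owned_neighborP v : 0 < v < x ->
  let u := owned_neighbor v in [/\ u != v, (u + v) %% x < 2 & claimant u v = v].
Proof.
move=> /andP[v_gt0 v_lt].
have x_eq : x = (x./2).*2.+1 by rewrite -[LHS]odd_double_half x_odd -addn1 addnC.
rewrite /owned_neighbor /claimant; set m := x./2 in x_eq *.
have [v_half | v_half] := leqP v m.
- have [v1 | v_gt1] := eqVneq v 1.
    rewrite v1 subn1 modnn add0n modn_small; last lia.
    by split => //; rewrite (_ : 1 == x.+1 = false) //; lia.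
  rewrite modn_small; last lia.
  rewrite subnK ?modnS ?modnn //=; last lia.
  by split; [apply/eqP; lia | case: ifP | rewrite eqxx; lia].
- rewrite modn_small ?subnK ?modnn; try lia.
  by split; [apply/eqP; lia | | rewrite (_ : x == x.+1 = false); lia].
Qed.

Lemma partner_lt v s : 0 < x -> partner v s < x.
Proof. by move=> x_gt0; rewrite /partner; case: ifP => _; rewrite ltn_pmod. Qed.

Lemma partnerP v s : v < x -> 1 < s < x ->
  partner v s != v /\ edge_label (partner v s) v = s.
Proof.
move=> v_lt /andP[s_gt1 s_lt]; rewrite /partner.
have [hit_s | miss_s] := eqVneq ((2 * v) %% x) s.
  have v_gt0 : 0 < v.
    by rewrite lt0n; apply: contraTneq s_gt1 => v0; rewrite -hit_s v0 muln0 mod0n.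
  have /owned_neighborP[u_neq u_sum u_claim] : 0 < v < x by rewrite v_gt0.
  split => //.
  by rewrite /edge_label ltnNge -ltnS u_sum u_claim.
have sum_s : ((s + x - v) %% x + v) %% x = s.
  by rewrite modnDml subnK ?modnDr ?modn_small //; lia.
split; last by rewrite /edge_label sum_s s_gt1.
by apply: contra miss_s => /eqP uv; rewrite -[X in _ == X]sum_s uv addnn -mul2n.
Qed.

End SumLabelling.

Section LabelColoring.
Variables (t : nat) (t_gt0 : 0 < t) (x : nat).

Definition label_color (s : nat) : 'I_t := Ordinal (ltn_pmod (s - 2) t_gt0).

Definition sum_coloring : edge_coloring x t :=
  lift_set2 (label_color 0) (fun u v : 'I_x => label_color (edge_label x u v)).

Lemma sum_coloring_degree q (v : 'I_x) (i : 'I_t) : odd x -> t * q + 1 < x ->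
  q <= color_degree sum_coloring v i.
Proof.
move=> x_odd x_big.
have x_gt0 : 0 < x by lia.
pose s (j : 'I_q) := 2 + (i + j * t).
have s_range j : 1 < s j < x.
  have : j.+1 * t <= q * t by rewrite leq_mul2r ltn_ord orbT.
  rewrite /s mulSn; have := ltn_ord i; lia.
pose f j : 'I_x := Ordinal (partner_lt v (s j) x_gt0).
have f_partner j : f j != v /\ edge_label x (f j) v = s j.
  exact: (partnerP x_odd (ltn_ord v) (s_range j)).
apply: (leq_color_degree (f := f)) => [j1 j2 | j].
  move/(congr1 (fun u : 'I_x => edge_label x u v)).
  rewrite (proj2 (f_partner j1)) (proj2 (f_partner j2)) /s.
  by move/eqP; rewrite !eqn_add2l eqn_mul2r eqn0Ngt t_gt0 => /eqP/val_inj.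
have [f_neq f_label] := f_partner j; split => //.
rewrite /sum_coloring lift_set2E; last by move=> a b; rewrite edge_labelC.
by apply: val_inj; rewrite /= f_label /s addKn addnC modnMDl modn_small.
Qed.

End LabelColoring.

Theorem lemma2 (t q r : nat) (x : nat) :
  2 <= r -> r <= t - 1 -> x = t * q + r -> odd x ->
  exists c : edge_coloring x t,
    forall (v : 'I_x) (i : 'I_t), q <= color_degree c v i.
Proof.
move=> r_ge2 r_lt x_eq x_odd.
have t_gt0 : 0 < t by lia.
exists (@sum_coloring t t_gt0 x) => v i.
by apply: sum_coloring_degree; lia.
Qed.
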